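(* Let $A$ be a synaptic algebra and $p,q\in P$. Let $r_p:=p\wedge(p^{\perp}\vee q)\wedge(p^{\perp}\vee q^{\perp})$, $r_{p^{\perp}}:=p^{\perp}\wedge(p\vee q)\wedge(p\vee q^{\perp})$, $r_q:=q\wedge(p\vee q^{\perp})\wedge(p^{\perp}\vee q^{\perp})$, $r_{q^{\perp}}:=q^{\perp}\wedge(p\vee q)\wedge(p^{\perp}\vee q)$, and $r:=[p,q]:=(p\vee q)\wedge(p\vee q^{\perp})\wedge(p^{\perp}\vee q)\wedge(p^{\perp}\vee q^{\perp})$ (so $r=r_p\oplus r_{p^{\perp}}=r_q\oplus r_{q^{\perp}}$). Then: (i) $pCq$ iff $r=0$; (ii) $pr_p=r_pp=r_p$, $pr_{p^{\perp}}=r_{p^{\perp}}p=0$, and $pr=rp=p\wedge r=r_p$; (iii) $p^{\perp}r_p=r_pp^{\perp}=0$, $p^{\perp}r_{p^{\perp}}=r_{p^{\perp}}p^{\perp}=r_{p^{\perp}}$, and $p^{\perp}r=rp^{\perp}=p^{\perp}\wedge r=r_{p^{\perp}}$; (iv) $qr_q=r_qq=r_q$, $qr_{q^{\perp}}=r_{q^{\perp}}q=0$, and $qr=rq=q\wedge r=r_q$; (v) $q^{\perp}r_q=r_qq^{\perp}=0$, $q^{\perp}r_{q^{\perp}}=r_{q^{\perp}}q^{\perp}=r_{q^{\perp}}$, and $q^{\perp}r=rq^{\perp}=q^{\perp}\wedge r=r_{q^{\perp}}$; (vi) $p,p^{\perp},q,q^{\perp}$ commute with $r$; (vii) $r_p$,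 $r_{p^{\perp}}$, $r_p^{\perp}$, $r_q$, $r_{q^{\perp}}$, $r_q^{\perp}$ commute with $r$; (viii) $r_p=p\wedge r=pr=rp$, $r_{p^{\perp}}=p^{\perp}\wedge r=p^{\perp}r=rp^{\perp}$, $r_q=q\wedge r=qr=rq$, and $r_{q^{\perp}}=q^{\perp}\wedge r=q^{\perp}r=rq^{\perp}$.
   Context: Synaptic algebra (Foulis): $R$ is a real linear associative algebra with unit $1$, and $A\subseteq R$ is a real linear subspace with $1\in A$. For $a,b\in A$ write $aCb$ iff $ab=ba$; $C(a):=\{b\in A: aCb\}$; $CC(a):=\{b\in A: bCd \text{ for all } d\in C(a)\}$. $A$ is a synaptic algebra with enveloping algebra $R$ iff: (SA1) $A$ is a partially ordered archimedean real linear space with positive cone $A^+$, $1$ is an order unit, $\|\cdot\|$ the order-unit norm; (SA2) $a\in A\Rightarrow a^2\in A^+$; (SA3) $a,b\in A^+\Rightarrow aba\in A^+$; (SA4) if $a\in A$, $b\in A^+$, $aba=0$ then $ab=ba=0$; (SA5) if $a\in A^+$ there is $b\in A^+\cap CC(a)$ with $b^2=a$; (SA6) for $a\in A$ there is $p=p^2\in A$ with $ab=0\Leftrightarrow pb=0$ for all $b\in A$; (SA7) if $1\le a$ there is $b\in A$ with $ab=ba=1$; (SA8) if $a,b\in A$, $a_1\le a_2\le\cdots$ are pairwise commuting elements of $C(b)$ with $\|a-a_n\|\to0$, then $a\in C(b)$. $A$ is nondegenerate. $P:=\{p\in A:p=p^2\}$ with the order inherited from $A$ is an orthomodular lattice with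 orthocomplement $p^{\perp}:=1-p$, meet $\wedge$, join $\vee$; $\oplus$ denotes the sum of orthogonal projections. *)

(* scalars R : realType (the real numbers), enveloping
   algebra E : algType R (real linear associative algebra with unit). *)
From HB Require Import structures.
From mathcomp Require Import all_boot all_order all_algebra.
From mathcomp Require Import reals.
From Stdlib Require Import ClassicalEpsilon.
Set Implicit Arguments. Unset Strict Implicit. Unset Printing Implicit Defensive.
Import Order.TTheory GRing.Theory Num.Theory.
Local Open Scope ring_scope.

Section Synaptic.
Variables (R : realType) (E : algType R).
(* A : the subspace A of E (as a predicate); pos : the positive cone A^+ *)
Variables (A pos : E -> Prop).

Definition sle (a b : E) : Prop := pos (b - a).

Definition scomm (a b : E) : Prop := a * b = b * a.
Definition inCC (a b : E) : Prop :=
  A b /\ forall d, A d -> scomm a d -> scomm b d.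

(* order-unit norm: ||x|| = inf {l >= 0 | -l 1 <= x <= l 1}.
   ||x_n|| -> 0  iff  for all eps > 0, eventually -eps 1 <= x_n <= eps 1. *)
Definition oun_cvg0 (x : nat -> E) : Prop :=
  forall eps : R, 0 < eps -> exists N : nat, forall n : nat, (N <= n)%N ->
    sle (- (eps *: 1)) (x n) /\ sle (x n) (eps *: 1).

Record synaptic : Prop := {
  sa_sub0 : A 0;
  sa_subD : forall a b, A a -> A b -> A (a + b);
  sa_subZ : forall (k : R) a, A a -> A (k *: a);
  sa_one : A 1;
  sa_nondeg : (1 : E) <> 0;
  sa_pos_sub : forall a, pos a -> A a;
  sa_pos0 : pos 0;
  sa_posD : forall a b, pos a -> pos b -> pos (a + b);
  sa_posZ : forall (k : R) a, 0 <= k -> pos a -> pos (k *: a);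
  sa_pos_anti : forall a, pos a -> pos (- a) -> a = 0;
  sa_archi : forall a b, A a -> A b ->
     (forall n : nat, sle (a *+ n) b) -> sle a 0;
  sa_unit : forall a, A a -> exists k : R, sle a (k *: 1);
  sa2 : forall a, A a -> pos (a * a);
  sa3 : forall a b, pos a -> pos b -> pos (a * b * a);
  sa4 : forall a b, A a -> pos b -> a * b * a = 0 -> a * b = 0 /\ b * a = 0;
  sa5 : forall a, pos a -> exists b, pos b /\ inCC a b /\ b * b = a;
  sa6 : forall a, A a -> exists p, A p /\ p * p = p /\
          forall b, A b -> (a * b = 0 <-> p * b = 0);
  sa7 : forall a, A a -> sle 1 a -> exists b, A b /\ a * b = 1 /\ b * a = 1;
  sa8 : forall a b (an : nat -> E), A a -> A b ->
          (forall n, A (an n)) ->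
          (forall n, scomm b (an n)) ->
          (forall n m, scomm (an n) (an m)) ->
          (forall n, sle (an n) (an n.+1)) ->
          oun_cvg0 (fun n => a - an n) ->
          scomm b a
}.

Definition proj (p : E) : Prop := A p /\ p * p = p.
Definition perp (p : E) : E := 1 - p.

Definition is_meet (p q m : E) : Prop :=
  proj m /\ sle m p /\ sle m q /\
  forall x, proj x -> sle x p -> sle x q -> sle x m.
Definition is_join (p q j : E) : Prop :=
  proj j /\ sle p j /\ sle q j /\
  forall x, proj x -> sle p x -> sle q x -> sle j x.

(* meet and join in the lattice P (the glb / lub in P, which exists since
   P is a lattice; chosen by classical description) *)
Definition pmeet (p q : E) : E := epsilon (inhabits 0) (is_meet p q).
Definition pjoin (p q : E) : E := epsilon (inhabits 0) (is_join p q).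

Definition rp (p q : E) : E :=
  pmeet (pmeet p (pjoin (perp p) q)) (pjoin (perp p) (perp q)).
Definition rpp (p q : E) : E :=
  pmeet (pmeet (perp p) (pjoin p q)) (pjoin p (perp q)).
Definition rq (p q : E) : E :=
  pmeet (pmeet q (pjoin p (perp q))) (pjoin (perp p) (perp q)).
Definition rqq (p q : E) : E :=
  pmeet (pmeet (perp q) (pjoin p q)) (pjoin (perp p) q).
Definition pcomm (p q : E) : E :=
  pmeet (pmeet (pmeet (pjoin p q) (pjoin p (perp q))) (pjoin (perp p) q))
        (pjoin (perp p) (perp q)).

End Synaptic.

(* Projections are ordered by e <= f iff e f = f e = e (SA3, SA4); the support
   projection of e + f given by SA6 is the join e \/ f, and meets follow by De
   Morgan.  Commuting projections meet in e f and orthogonal ones join in e + f.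
   The complement of r = [p, q] is the orthogonal sum of the four corners
   p /\ q, p /\ q', p' /\ q, p' /\ q', each of which lies under p or p' and
   under q or q'; hence p and q commute with r, and p /\ r = p r, etc.  When p
   and q commute the corners are the products p q, p q', p' q, p' q', which sum
   to 1; conversely, if r = 0 then p = p /\ q + p /\ q' and q = p /\ q + p' /\ q
   commute.  Finally r_p = p /\ r and its three analogues are lattice absorption. *)

From Pilot Require Import Defs.
From HB Require Import structures.
From mathcomp Require Import all_boot all_order all_algebra.
From mathcomp Require Import reals.
From Stdlib Require Import ClassicalEpsilon.
Import Order.TTheory GRing.Theory Num.Theory.
Set Implicit Arguments. Unset Strict Implicit. Unset Printing Implicit Defensive.
Local Open Scope ring_scope.

Section ProjectionLattice.
Variables (R : realType) (E : algType R) (A pos : E -> Prop).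
Hypothesis HA : synaptic A pos.

Local Notation proj := (proj A).
Local Notation sle := (sle pos).
Local Notation pmeet := (pmeet A pos).
Local Notation pjoin := (pjoin A pos).

Lemma sa_subB a b : A a -> A b -> A (a - b).
Proof. by move=> Aa Ab; apply: (sa_subD HA) => //; rewrite -scaleN1r; apply: (sa_subZ HA). Qed.

Lemma perpK (e : E) : perp (perp e) = e.
Proof. exact: subKr. Qed.

Lemma scomm_perp (a b : E) : scomm a b -> scomm (perp a) b.
Proof. by move=> ab; apply/commr_sym/commrB; [apply: commr1 | apply: commr_sym]. Qed.

Lemma proj_pos e : proj e -> pos e.
Proof. by case=> Ae ee; rewrite -ee; apply: (sa2 HA). Qed.

Lemma proj_perp e : proj e -> proj (perp e).
Proof.
case=> Ae ee; split; first exact: sa_subB (sa_one HA) Ae.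
by rewrite /perp mulrBl mul1r mulrBr mulr1 ee subrr subr0.
Qed.

Lemma mul_proj_perp e : proj e -> e * perp e = 0 /\ perp e * e = 0.
Proof. by case=> _ ee; rewrite /perp mulrBr mulrBl mulr1 mul1r ee subrr. Qed.

Lemma comm_proj_mul x y : proj x -> scomm x y ->
  [/\ x * (x * y) = x * y, x * y * x = x * y, perp x * (x * y) = 0 & x * y * perp x = 0].
Proof.
move=> Px xy; have [_ xx] := Px; have [xx' x'x] := mul_proj_perp Px.
split; first by rewrite mulrA xx.
- by rewrite -mulrA -xy mulrA xx.
- by rewrite mulrA x'x mul0r.
- by rewrite -mulrA -(scomm_perp xy) mulrA xx' mul0r.
Qed.

Lemma sle_refl (a : E) : sle a a.
Proof. by rewrite /Defs.sle subrr; apply: (sa_pos0 HA). Qed.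

Lemma sle_trans (a b c : E) : sle a b -> sle b c -> sle a c.
Proof.
rewrite /Defs.sle => ab bc.
have -> : c - a = (c - b) + (b - a) by rewrite addrA subrK.
exact: (sa_posD HA).
Qed.

Lemma sle_anti (a b : E) : sle a b -> sle b a -> a = b.
Proof.
rewrite /Defs.sle => ab ba; apply/esym/subr0_eq.
by apply: (sa_pos_anti HA) => //; rewrite opprB.
Qed.

Lemma sle_perp (a b : E) : sle a b -> sle (perp b) (perp a).
Proof.
rewrite /Defs.sle /perp.
by have -> : 1 - a - (1 - b) = b - a by rewrite opprB addrC addrA subrK.
Qed.

Lemma sle_proj e f : proj e -> proj f -> sle e f <-> e * f = e /\ f * e = e.
Proof.
move=> [Ae ee] [Af ff]; split=> [fe | [ef fe]].
- have [Af' ff'] := proj_perp (conj Af ff).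
  have [_ f'f] := mul_proj_perp (conj Af ff).
  (* f' e f' >= 0, while f' e f' = - f' (f - e) f' <= 0 since f' f = 0 *)
  have f'ef' : perp f * e * perp f = 0.
    apply: (sa_pos_anti HA); first by apply: (sa3 HA); apply: proj_pos.
    rewrite -mulNr -sub0r -f'f -mulrBr.
    by apply: (sa3 HA) => //; apply: proj_pos.
  have [f'e ef'] := sa4 HA Af' (proj_pos (conj Ae ee)) f'ef'.
  by move: f'e ef'; rewrite /perp mulrBl mulrBr mul1r mulr1 => /subr0_eq<- /subr0_eq<-.
- rewrite /Defs.sle; have <- : (f - e) * (f - e) = f - e.
    by rewrite mulrBl !mulrBr ff ee ef fe subrr subr0.
  by apply: (sa2 HA); apply: sa_subB.
Qed.

Lemma sle_proj_perp e f : proj e -> proj f ->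
  sle e f <-> e * perp f = 0 /\ perp f * e = 0.
Proof.
move=> Pe Pf; rewrite sle_proj // /perp mulrBr mulrBl mulr1 mul1r.
by split=> [[-> ->] | [/subr0_eq <- /subr0_eq <-]]; rewrite ?subrr.
Qed.

Lemma proj_orth_addl g e f : proj g -> proj e -> proj f ->
  (e + f) * g = 0 -> g * e = 0 /\ e * g = 0.
Proof.
move=> [Ag gg] Pe Pf efg.
have geg : g * e * g = 0.
  apply: (sa_pos_anti HA); first by apply: (sa3 HA) => //; apply: proj_pos.
  have : g * e * g + g * f * g = 0 by rewrite -mulrDl -mulrDr -mulrA efg mulr0.
  move/eqP; rewrite addr_eq0 => /eqP ->; rewrite opprK.
  by apply: (sa3 HA) => //; apply: proj_pos.
exact: (sa4 HA Ag (proj_pos Pe) geg).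
Qed.

Lemma is_join_exists e f : proj e -> proj f -> exists j, is_join A pos e f j.
Proof.
move=> Pe Pf.
have Aef : A (e + f) by apply: (sa_subD HA); [case: Pe | case: Pf].
have [j [Aj [jj supp]]] := sa6 HA Aef.
have Pj : proj j by [].
have [Aj' _] := proj_perp Pj.
have efj' : (e + f) * perp j = 0 by apply/supp => //; rewrite (mul_proj_perp Pj).1.
exists j; split; [done | split; [|split]].
- have [j'e ej'] := proj_orth_addl (proj_perp Pj) Pe Pf efj'.
  exact/sle_proj_perp.
- rewrite addrC in efj'; have [j'f fj'] := proj_orth_addl (proj_perp Pj) Pf Pe efj'.
  exact/sle_proj_perp.
- move=> x Px /(sle_proj_perp Pe Px) [ex' _] /(sle_proj_perp Pf Px) [fx' _].
  have [Ax' _] := proj_perp Px.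
  have jx' : j * perp x = 0 by apply/supp => //; rewrite mulrDl ex' fx' addr0.
  have x'jx' : perp x * j * perp x = 0 by rewrite -mulrA jx' mulr0.
  have [x'j jx'0] := sa4 HA Ax' (proj_pos Pj) x'jx'.
  exact/sle_proj_perp.
Qed.

Lemma pjoinP e f : proj e -> proj f -> is_join A pos e f (pjoin e f).
Proof. by move=> Pe Pf; apply: epsilon_spec; apply: is_join_exists. Qed.

Lemma is_meet_perp_pjoin e f : proj e -> proj f ->
  is_meet A pos e f (perp (pjoin (perp e) (perp f))).
Proof.
move=> Pe Pf.
have [Pj [e'j [f'j jlub]]] := pjoinP (proj_perp Pe) (proj_perp Pf).
split; first exact: proj_perp.
split; [|split]; first by move: (sle_perp e'j); rewrite perpK.
  by move: (sle_perp f'j); rewrite perpK.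
move=> x Px xe xf; rewrite -[x]perpK; apply: sle_perp.
by apply: jlub; [apply: proj_perp | apply: sle_perp..].
Qed.

Lemma pmeetP e f : proj e -> proj f -> is_meet A pos e f (pmeet e f).
Proof. by move=> Pe Pf; apply: epsilon_spec; eexists; apply: is_meet_perp_pjoin. Qed.

Lemma pmeet_unique e f m : proj e -> proj f -> is_meet A pos e f m -> pmeet e f = m.
Proof.
move=> Pe Pf [Pm [me [mf mglb]]].
have [Pm' [m'e [m'f m'glb]]] := pmeetP Pe Pf.
by apply: sle_anti; [apply: mglb | apply: m'glb].
Qed.

Lemma pjoin_unique e f j : proj e -> proj f -> is_join A pos e f j -> pjoin e f = j.
Proof.
move=> Pe Pf [Pj [ej [fj jlub]]].
have [Pj' [ej' [fj' j'lub]]] := pjoinP Pe Pf.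
by apply: sle_anti; [apply: j'lub | apply: jlub].
Qed.

Lemma perp_pjoin e f : proj e -> proj f -> perp (pjoin e f) = pmeet (perp e) (perp f).
Proof.
move=> Pe Pf; symmetry; apply: pmeet_unique; try exact: proj_perp.
by have := is_meet_perp_pjoin (proj_perp Pe) (proj_perp Pf); rewrite !perpK.
Qed.

Lemma proj_pmeet e f : proj e -> proj f -> proj (pmeet e f).
Proof. by move=> Pe Pf; case: (pmeetP Pe Pf). Qed.

Lemma proj_pjoin e f : proj e -> proj f -> proj (pjoin e f).
Proof. by move=> Pe Pf; case: (pjoinP Pe Pf). Qed.

#[local] Hint Resolve proj_perp proj_pmeet proj_pjoin : core.

Lemma sle_pmeetl e f : proj e -> proj f -> sle (pmeet e f) e.
Proof. by move=> Pe Pf; case: (pmeetP Pe Pf) => _ []. Qed.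

Lemma sle_pmeetr e f : proj e -> proj f -> sle (pmeet e f) f.
Proof. by move=> Pe Pf; case: (pmeetP Pe Pf) => _ [_ []]. Qed.

Lemma sle_pjoinl e f : proj e -> proj f -> sle e (pjoin e f).
Proof. by move=> Pe Pf; case: (pjoinP Pe Pf) => _ []. Qed.

Lemma sle_pjoinr e f : proj e -> proj f -> sle f (pjoin e f).
Proof. by move=> Pe Pf; case: (pjoinP Pe Pf) => _ [_ []]. Qed.

Lemma sle_pmeetP x e f : proj x -> proj e -> proj f ->
  sle x (pmeet e f) <-> sle x e /\ sle x f.
Proof.
move=> Px Pe Pf; split=> [xm | [xe xf]]; last by case: (pmeetP Pe Pf) => _ [_ [_]]; apply.
by split; apply: sle_trans xm _; [apply: sle_pmeetl | apply: sle_pmeetr].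
Qed.

Lemma proj_eq_sle e f : proj e -> proj f ->
  (forall x, proj x -> sle x e <-> sle x f) -> e = f.
Proof.
by move=> Pe Pf ef; apply: sle_anti; [apply/(ef e Pe) | apply/(ef f Pf)]; apply: sle_refl.
Qed.

Lemma sa_mul_comm e f : proj e -> proj f -> scomm e f -> A (e * f).
Proof.
move=> [Ae ee] [Af ff] ef.
have Aef : A (e + f) by apply: (sa_subD HA).
have A2ef : A ((e * f) *+ 2).
  have -> : (e * f) *+ 2 = (e + f) * (e + f) - (e + f).
    rewrite mulrDl !mulrDr ee ff -ef [e * f + f]addrC addrACA.
    by rewrite [RHS]addrC addKr mulr2n.
  by apply: sa_subB => //; apply/(sa_pos_sub HA)/(sa2 HA).
have -> : e * f = (2%:R^-1 : R) *: ((e * f) *+ 2).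
  by rewrite -scaler_nat scalerA mulVf ?scale1r // pnatr_eq0.
exact: (sa_subZ HA).
Qed.

Lemma pmeet_comm e f : proj e -> proj f -> scomm e f -> pmeet e f = e * f.
Proof.
move=> Pe Pf ef; have [Ae ee] := Pe; have [Af ff] := Pf.
have Pef : proj (e * f).
  by split; [apply: sa_mul_comm | rewrite mulrA -[e * f * e]mulrA -ef mulrA ee -mulrA ff].
apply: pmeet_unique => //; split=> //; split; [|split].
- by apply/sle_proj => //; split; [rewrite -mulrA -ef |]; rewrite mulrA ee.
- by apply/sle_proj => //; split; [|rewrite mulrA -ef]; rewrite -mulrA ff.
- move=> x Px /(sle_proj Px Pe) [xe ex] /(sle_proj Px Pf) [xf fx].
  by apply/sle_proj => //; rewrite mulrA xe xf -mulrA fx ex.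
Qed.

Lemma pjoin_orth e f : proj e -> proj f -> e * f = 0 -> f * e = 0 -> pjoin e f = e + f.
Proof.
move=> Pe Pf ef fe; have [Ae ee] := Pe; have [Af ff] := Pf.
have Pef : proj (e + f).
  by split; [apply: (sa_subD HA) | rewrite mulrDl !mulrDr ee ff ef fe addr0 add0r].
apply: pjoin_unique => //; split=> //; split; [|split].
- by apply/sle_proj => //; rewrite mulrDr mulrDl ee ef fe !addr0.
- by apply/sle_proj => //; rewrite mulrDr mulrDl ff ef fe !add0r.
- move=> x Px /(sle_proj Pe Px) [ex xe] /(sle_proj Pf Px) [fx xf].
  by apply/sle_proj => //; rewrite mulrDl mulrDr ex xe fx xf.
Qed.

Lemma mul_proj_le e f : proj e -> proj f -> sle e f -> f * e = e.
Proof. by move=> Pe Pf /(sle_proj Pe Pf) []. Qed.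

Lemma orth_sle_perp e f g : proj e -> proj f -> proj g ->
  sle e g -> sle f (perp g) -> e * f = 0 /\ f * e = 0.
Proof.
move=> Pe Pf Pg /(sle_proj Pe Pg) [eg ge] /(sle_proj Pf (proj_perp Pg)) [fg' g'f].
have [gg' g'g] := mul_proj_perp Pg.
split; first by rewrite -eg -g'f mulrA -(mulrA e) gg' mulr0 mul0r.
by rewrite -fg' -ge mulrA -(mulrA f) g'g mulr0 mul0r.
Qed.

Lemma mul_proj_le_perp e f : proj e -> proj f -> sle e (perp f) -> f * e = 0.
Proof. by move=> Pe Pf ef'; case: (orth_sle_perp Pf Pe Pf (sle_refl _) ef'). Qed.

Lemma scomm_sle x a : proj x -> proj a -> sle a x \/ sle a (perp x) -> scomm x a.
Proof.
rewrite /scomm => Px Pa [/(sle_proj Pa Px) [-> ->] // | ax'].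
by have [-> ->] := orth_sle_perp Px Pa Px (sle_refl _) ax'.
Qed.

Lemma perp_pmeet e f : proj e -> proj f -> perp (pmeet e f) = pjoin (perp e) (perp f).
Proof.
by move=> Pe Pf; rewrite -[pjoin _ _]perpK perp_pjoin ?perpK //; apply: proj_perp.
Qed.

Lemma orth_pmeet_perpl e f g : proj e -> proj f -> proj g ->
  pmeet e f * pmeet (perp e) g = 0 /\ pmeet (perp e) g * pmeet e f = 0.
Proof.
by move=> Pe Pf Pg; apply: (orth_sle_perp (g := e)); auto using sle_pmeetl.
Qed.

Lemma orth_pmeet_perpr e f g : proj e -> proj f -> proj g ->
  pmeet f e * pmeet g (perp e) = 0 /\ pmeet g (perp e) * pmeet f e = 0.
Proof.
by move=> Pe Pf Pg; apply: (orth_sle_perp (g := e)); auto using sle_pmeetr.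
Qed.

Section Commutator.
Variables p q : E.
Hypotheses (Pp : proj p) (Pq : proj q).
#[local] Hint Resolve Pp Pq : core.

Local Notation r := (pcomm A pos p q).
Local Notation a11 := (pmeet p q).
Local Notation a10 := (pmeet p (perp q)).
Local Notation a01 := (pmeet (perp p) q).
Local Notation a00 := (pmeet (perp p) (perp q)).

Lemma proj_pcomm : proj r.
Proof. by rewrite /pcomm; auto 10. Qed.

Lemma perp_pcomm : perp r = a00 + a01 + a10 + a11.
Proof.
have [o01_00 o00_01] := orth_pmeet_perpr Pq (proj_perp Pp) (proj_perp Pp).
have [o10_00 o00_10] := orth_pmeet_perpl Pp (proj_perp Pq) (proj_perp Pq).
have [o11_00 o00_11] := orth_pmeet_perpl Pp Pq (proj_perp Pq).
have [o10_01 o01_10] := orth_pmeet_perpl Pp (proj_perp Pq) Pq.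
have [o11_01 o01_11] := orth_pmeet_perpl Pp Pq Pq.
have [o11_10 o10_11] := orth_pmeet_perpr Pq Pp Pp.
rewrite /pcomm !perp_pmeet ?perp_pjoin ?perpK; auto 10.
have j1 : pjoin a00 a01 = a00 + a01 by apply: pjoin_orth; auto.
have P1 : proj (a00 + a01) by rewrite -j1; auto.
have j2 : pjoin (a00 + a01) a10 = a00 + a01 + a10.
  by apply: pjoin_orth; rewrite ?mulrDl ?mulrDr ?o00_10 ?o01_10 ?o10_00 ?o10_01 ?addr0; auto.
have P2 : proj (a00 + a01 + a10) by rewrite -j2; auto.
rewrite j1 j2; apply: pjoin_orth; auto;
  by rewrite ?mulrDl ?mulrDr ?o00_11 ?o01_11 ?o10_11 ?o11_00 ?o11_01 ?o11_10 !addr0.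
Qed.

Lemma scomm_pcomm x :
  scomm x a00 -> scomm x a01 -> scomm x a10 -> scomm x a11 -> scomm x r.
Proof.
move=> x00 x01 x10 x11; rewrite -[r]perpK perp_pcomm.
by apply: commrB; [apply: commr1 | do 3 apply: commrD => //].
Qed.

Lemma scomm_p_pcomm : scomm p r.
Proof.
apply: scomm_pcomm; apply: scomm_sle; auto;
  solve [left; apply: sle_pmeetl; auto | right; apply: sle_pmeetl; auto].
Qed.

Lemma scomm_q_pcomm : scomm q r.
Proof.
apply: scomm_pcomm; apply: scomm_sle; auto;
  solve [left; apply: sle_pmeetr; auto | right; apply: sle_pmeetr; auto].
Qed.

Lemma pcomm_eq0P : scomm p q <-> r = 0.
Proof.
split=> [pq | r0].
- have pq' : scomm p (perp q) by apply/commr_sym/scomm_perp.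
  have p'q := scomm_perp pq; have p'q' := scomm_perp pq'.
  rewrite -[r]perpK perp_pcomm !pmeet_comm; auto.
  by rewrite -addrA -!mulrDr /perp subrK !mulr1 subrK subrr.
- have sum1 : a00 + a01 + a10 + a11 = 1 by rewrite -perp_pcomm r0 /perp subr0.
  have [p00 p01 p10 p11] : [/\ p * a00 = 0, p * a01 = 0, p * a10 = a10 & p * a11 = a11].
    split; [apply: mul_proj_le_perp..| apply: mul_proj_le | apply: mul_proj_le];
      by auto; apply: sle_pmeetl; auto.
  have [q00 q01 q10 q11] : [/\ q * a00 = 0, q * a01 = a01, q * a10 = 0 & q * a11 = a11].
    split; [apply: mul_proj_le_perp | apply: mul_proj_le
           | apply: mul_proj_le_perp | apply: mul_proj_le];
      by auto; apply: sle_pmeetr; auto.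
  have p_sum : p = a10 + a11 by rewrite -{1}(mulr1 p) -sum1 !mulrDr p00 p01 p10 p11 !add0r.
  have q_sum : q = a01 + a11 by rewrite -{1}(mulr1 q) -sum1 !mulrDr q00 q01 q10 q11 add0r addr0.
  by rewrite /scomm [q in p * q]q_sum [p in q * p]p_sum !mulrDr p01 p11 q10 q11 !add0r.
Qed.

Lemma rp_pmeet : rp A pos p q = pmeet p r.
Proof.
have pj : sle p (pjoin p q) by apply: sle_pjoinl.
have pj' : sle p (pjoin p (perp q)) by apply: sle_pjoinl; auto.
apply: proj_eq_sle; rewrite /rp /pcomm; auto 10 => x Px.
by rewrite !sle_pmeetP; auto 10; intuition eauto using sle_trans.
Qed.

Lemma rpp_pmeet : rpp A pos p q = pmeet (perp p) r.
Proof.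
have pj : sle (perp p) (pjoin (perp p) q) by apply: sle_pjoinl; auto.
have pj' : sle (perp p) (pjoin (perp p) (perp q)) by apply: sle_pjoinl; auto.
apply: proj_eq_sle; rewrite /rpp /pcomm; auto 10 => x Px.
by rewrite !sle_pmeetP; auto 10; intuition eauto using sle_trans.
Qed.

Lemma rq_pmeet : rq A pos p q = pmeet q r.
Proof.
have qj : sle q (pjoin p q) by apply: sle_pjoinr.
have qj' : sle q (pjoin (perp p) q) by apply: sle_pjoinr; auto.
apply: proj_eq_sle; rewrite /rq /pcomm; auto 10 => x Px.
by rewrite !sle_pmeetP; auto 10; intuition eauto using sle_trans.
Qed.

Lemma rqq_pmeet : rqq A pos p q = pmeet (perp q) r.
Proof.
have qj : sle (perp q) (pjoin p (perp q)) by apply: sle_pjoinr; auto.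
have qj' : sle (perp q) (pjoin (perp p) (perp q)) by apply: sle_pjoinr; auto.
apply: proj_eq_sle; rewrite /rqq /pcomm; auto 10 => x Px.
by rewrite !sle_pmeetP; auto 10; intuition eauto using sle_trans.
Qed.

End Commutator.
End ProjectionLattice.

Theorem theorem3p8 (R : realType) (E : algType R) (A pos : E -> Prop)
  (HA : synaptic A pos) (p q : E) (Hp : proj A p) (Hq : proj A q) :
  let r := pcomm A pos p q in
  let r_p := rp A pos p q in
  let r_pp := rpp A pos p q in
  let r_q := rq A pos p q in
  let r_qq := rqq A pos p q in
  let pmeet := pmeet A pos in
  (* (i) *)
  (p * q = q * p <-> r = 0) /\
  (* (ii) *)
  (p * r_p = r_p /\ r_p * p = r_p /\ p * r_pp = 0 /\ r_pp * p = 0 /\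
   p * r = r * p /\ r * p = pmeet p r /\ pmeet p r = r_p) /\
  (* (iii) *)
  (perp p * r_p = 0 /\ r_p * perp p = 0 /\
   perp p * r_pp = r_pp /\ r_pp * perp p = r_pp /\
   perp p * r = r * perp p /\ r * perp p = pmeet (perp p) r /\
   pmeet (perp p) r = r_pp) /\
  (* (iv) *)
  (q * r_q = r_q /\ r_q * q = r_q /\ q * r_qq = 0 /\ r_qq * q = 0 /\
   q * r = r * q /\ r * q = pmeet q r /\ pmeet q r = r_q) /\
  (* (v) *)
  (perp q * r_q = 0 /\ r_q * perp q = 0 /\
   perp q * r_qq = r_qq /\ r_qq * perp q = r_qq /\
   perp q * r = r * perp q /\ r * perp q = pmeet (perp q) r /\
   pmeet (perp q) r = r_qq) /\
  (* (vi) *)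
  (scomm p r /\ scomm (perp p) r /\ scomm q r /\ scomm (perp q) r) /\
  (* (vii) *)
  (scomm r_p r /\ scomm r_pp r /\ scomm (perp r_p) r /\
   scomm r_q r /\ scomm r_qq r /\ scomm (perp r_q) r) /\
  (* (viii) *)
  (r_p = pmeet p r /\ pmeet p r = p * r /\ p * r = r * p /\
   r_pp = pmeet (perp p) r /\ pmeet (perp p) r = perp p * r /\
   perp p * r = r * perp p /\
   r_q = pmeet q r /\ pmeet q r = q * r /\ q * r = r * q /\
   r_qq = pmeet (perp q) r /\ pmeet (perp q) r = perp q * r /\
   perp q * r = r * perp q).
Proof.
cbv zeta.
have Pr := proj_pcomm HA Hp Hq.
have pr : scomm p (pcomm A pos p q) := scomm_p_pcomm HA Hp Hq.
have qr : scomm q (pcomm A pos p q) := scomm_q_pcomm HA Hp Hq.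
have p'r := scomm_perp pr; have q'r := scomm_perp qr.
rewrite rp_pmeet ?rpp_pmeet ?rq_pmeet ?rqq_pmeet // !pmeet_comm //; try exact: (proj_perp HA).
set r := pcomm A pos p q in Pr pr qr p'r q'r *.
have xr_r x : scomm x r -> scomm (x * r) r by move=> xr; apply/commr_sym/commrM.
have [pp p_r_p p'p p_r_p'] := comm_proj_mul Hp pr.
have [p'p' p'_r_p' pp' p'_r_p] := comm_proj_mul (proj_perp HA Hp) p'r.
have [qq q_r_q q'q q_r_q'] := comm_proj_mul Hq qr.
have [q'q' q'_r_q' qq' q'_r_q] := comm_proj_mul (proj_perp HA Hq) q'r.
rewrite perpK in pp' p'_r_p; rewrite perpK in qq' q'_r_q.
split; first exact: (pcomm_eq0P HA Hp Hq).
by do !split; rewrite // -?pr -?p'r -?qr -?q'r //; try apply: scomm_perp; apply: xr_r.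
Qed.
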